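(* Let $\alpha>-1$, $n\ge1$ an integer, and $L_n^{(\alpha)}(x)=\binom{n+\alpha}{n}\,{}_1F_1\!\left(\begin{matrix}-n\\ \alpha+1\end{matrix};x\right)$ the classical Laguerre polynomial. Define for $i=0,1,2,\ldots$ $$b_i^*(\alpha,x)=\frac{1}{i!}\sum_{j=0}^i(-1)^j\binom{i}{j}(\alpha+1)_{i-j}x^j,\qquad c_i^*(\alpha,x)=\frac{(-1)^i}{i!}x^i .$$ Then, with $D=d/dx$, for $k=0,1,2$: $$\sum_{i=0}^\infty b_i^*(\alpha,x)D^{i+k}L_n^{(\alpha)}(x)=\frac{(-n)_k}{n\,\Gamma(k)}\quad(\text{i.e. }0,\,-1,\,n-1\text{ for }k=0,1,2),$$ and $$\sum_{i=0}^\infty c_i^*(\alpha,x)D^{i+k}L_n^{(\alpha)}(x)=\binom{n+\alpha}{n}\frac{(-n)_k}{(\alpha+1)_k}.$$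
   Context: $(a)_k$ is the Pochhammer symbol ($(a)_0=1$, $(a)_k=a(a+1)\cdots(a+k-1)$), $\binom{\gamma}{m}$ the generalized binomial coefficient, ${}_1F_1$ the confluent hypergeometric series $\sum_k\frac{(a)_k}{(b)_k}\frac{z^k}{k!}$. $1/\Gamma(0)$ is interpreted as $0$. The sums are finite since $L_n^{(\alpha)}$ is a polynomial of degree $n$. *)

From mathcomp Require Import all_boot all_order all_algebra.
Set Implicit Arguments. Unset Strict Implicit. Unset Printing Implicit Defensive.
Import Order.TTheory GRing.Theory Num.Theory.
Local Open Scope ring_scope.

Definition poch {R : pzRingType} (a : R) (k : nat) : R :=
  \prod_(i < k) (a + i%:R).

Definition gbinom {R : fieldType} (g : R) (m : nat) : R :=
  (\prod_(i < m) (g - i%:R)) / (m`!)%:R.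

(* Classical Laguerre polynomial
   L_n^(a)(x) = binom(n+a, n) * 1F1(-n; a+1; x)
              = binom(n+a, n) * sum_k (-n)_k / ((a+1)_k k!) x^k,
   the series terminating at k = n since (-n)_k = 0 for k > n. *)
Definition laguerre {R : fieldType} (n : nat) (a : R) : {poly R} :=
  \poly_(k < n.+1)
    (gbinom (n%:R + a) n * (poch (- n%:R) k / (poch (a + 1) k * (k`!)%:R))).

Definition bstar {R : fieldType} (a x : R) (i : nat) : R :=
  (i`!)%:R^-1 *
  \sum_(j < i.+1) ((-1) ^+ j * ('C(i, j))%:R * poch (a + 1) (i - j) * x ^+ j).

Definition cstar {R : fieldType} (x : R) (i : nat) : R :=
  (-1) ^+ i / (i`!)%:R * x ^+ i.

(* 1/Gamma(k) for natural k, with the convention 1/Gamma(0) = 0. *)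
Definition inv_gamma_nat {R : fieldType} (k : nat) : R :=
  if k is k'.+1 then (k'`!)%:R^-1 else 0.

From mathcomp Require Import all_boot all_order all_algebra.
From mathcomp Require Import ring lra.
Import Order.TTheory GRing.Theory Num.Theory.
Local Open Scope ring_scope.

(* Both sums have the shape S = sum_i B_i * L^(i+k) with polynomial weights
   satisfying B_0' = 0 and B_(i+1)' = -B_i: this holds for c*_i, and b*_i is
   the convolution of c*_i with the constants (a+1)_m/m!.  Then S' telescopes
   to B_n * L^(n+k+1) = 0, so S(x) = S(0).  Since c*_i(0) = [i = 0], the second
   sum is L^(k)(0).  Since b*_i(0) = (a+1)_i/i!, the first one reduces to the
   alternating sum sum_i (-1)^i C(N,i) / (c+i)_k with N = n - k, c = a + 1,
   which equals
   (N+k-1)! / ((k-1)! (c)_(N+k)) for k >= 1 (induction on N via the partial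
   fraction 1/(u)_k - 1/(u+1)_k = k/(u)_(k+1)) and vanishes for k = 0. *)

Lemma natr_fact_neq0 {R : numDomainType} m : (m`!)%:R != 0 :> R.
Proof. by rewrite pnatr_eq0 -lt0n fact_gt0. Qed.

Section Lowering.
Context {R : numDomainType}.
Implicit Types (p q : {poly R}) (B : nat -> {poly R}).

Definition lowering_seq B := (B 0)^`() = 0 /\ forall i, (B i.+1)^`() = - B i.

Lemma deriv_eq0_horner p x : p^`() = 0 -> p.[x] = p.[0].
Proof.
move=> dp0; suff -> : p = (p`_0)%:P by rewrite !hornerC.
apply/polyP => -[|i]; rewrite coefC //=.
have /eqP := congr1 (fun r : {poly R} => r`_i) dp0.
by rewrite coef_deriv coef0 mulrn_eq0 => /eqP.
Qed.

Lemma deriv_sum_lowering B q N : lowering_seq B ->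
  (\sum_(i < N.+1) B i * q^`(i))^`() = B N * q^`(N.+1).
Proof.
case=> B0 BS; rewrite raddf_sum /=.
under eq_bigr do rewrite derivM -derivnS.
elim: N => [|N IH]; first by rewrite big_ord1 B0 mul0r add0r.
by rewrite big_ord_recr /= IH BS mulNr addNKr.
Qed.

Lemma horner_sum_lowering B q N x : lowering_seq B -> q^`(N) = 0 ->
  (\sum_(i < N) B i * q^`(i)).[x] = \sum_(i < N) (B i).[0] * (q^`(i)).[0].
Proof.
move=> lowB qN0; rewrite (deriv_eq0_horner _ x) ?horner_sum.
  by apply: eq_bigr => i _; rewrite hornerM.
case: N qN0 => [|N] qN0; first by rewrite big_ord0 deriv0.
by rewrite deriv_sum_lowering // qN0 mulr0.
Qed.
End Lowering.

Section CstarPolynomials.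
Context {R : numFieldType}.
Implicit Types (q : {poly R}) (beta : nat -> R) (C : nat -> {poly R}).

Definition cstar_poly i : {poly R} := ((-1) ^+ i / (i`!)%:R) *: 'X^i.

Lemma horner_cstar_poly i x : (cstar_poly i).[x] = cstar x i.
Proof. by rewrite hornerZ hornerXn. Qed.

Lemma cstar_poly_at0 i : (cstar_poly i).[0] = (i == 0)%:R.
Proof.
by rewrite hornerZ hornerXn expr0n; case: i => [|i]; rewrite ?divr1 ?mulr1 ?mulr0.
Qed.

Lemma cstar_poly_lowering : lowering_seq cstar_poly.
Proof.
split=> [|i]; first by rewrite derivZ derivXn mulr0n scaler0.
rewrite derivZ derivXn -scaler_nat scalerA -scaleNr; congr (_ *: _).
have := natr_fact_neq0 (R := R) i; have : (i.+1)%:R != 0 :> R by rewrite pnatr_eq0.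
rewrite factS natrM exprS => iS0 if0; field.
by rewrite (addrC 1) natr1 iS0 if0.
Qed.

Definition lowering_conv beta C i : {poly R} :=
  \sum_(m < i.+1) beta m *: C (i - m)%N.

Lemma lowering_conv_lowering beta C :
  lowering_seq C -> lowering_seq (lowering_conv beta C).
Proof.
rewrite /lowering_conv; case=> C0 CS; split=> [|i].
  by rewrite raddf_sum big_ord1 /= derivZ C0 scaler0.
rewrite raddf_sum big_ord_recr /= subnn derivZ C0 scaler0 addr0 -sumrN.
by apply: eq_bigr => m _; rewrite derivZ subSn ?CS ?scalerN // -ltnS.
Qed.

Lemma lowering_conv_cstar_at0 beta i : (lowering_conv beta cstar_poly i).[0] = beta i.
Proof.
rewrite horner_sum big_ord_recr /= big1 ?add0r => [|m _].
  by rewrite hornerZ subnn cstar_poly_at0 mulr1.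
by rewrite hornerZ cstar_poly_at0 subn_eq0 leqNgt ltn_ord mulr0.
Qed.

Lemma horner_sum_cstar_poly q N x : q^`(N) = 0 ->
  (\sum_(i < N) cstar_poly i * q^`(i)).[x] = q.[0].
Proof.
move=> qN0; rewrite horner_sum_lowering //; last exact: cstar_poly_lowering.
case: N qN0 => [|N]; first by rewrite derivn0 => ->; rewrite big_ord0 horner0.
move=> _.
rewrite big_ord_recl big1 => [|i _]; first by rewrite cstar_poly_at0 mul1r derivn0 addr0.
by rewrite cstar_poly_at0 mul0r.
Qed.

Lemma horner_sum_conv_cstar_poly beta q N x : q^`(N) = 0 ->
  (\sum_(i < N) lowering_conv beta cstar_poly i * q^`(i)).[x]
  = \sum_(i < N) beta i * (q^`(i)).[0].
Proof.
move=> qN0; rewrite horner_sum_lowering //.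
  by apply: eq_bigr => i _; rewrite lowering_conv_cstar_at0.
exact/lowering_conv_lowering/cstar_poly_lowering.
Qed.

Lemma horner0_derivn q m : (q^`(m)).[0] = q`_m *+ m`!.
Proof. by rewrite horner_coef0 coef_derivn addn0 ffactnn. Qed.
End CstarPolynomials.

Section Pochhammer.
Context {R : numFieldType}.
Implicit Types (c u : R) (m k : nat).

Lemma poch0 c : poch c 0 = 1.
Proof. by rewrite /poch big_ord0. Qed.

Lemma poch_recr c m : poch c m.+1 = poch c m * (c + m%:R).
Proof. by rewrite /poch big_ord_recr. Qed.

Lemma poch_recl c m : poch c m.+1 = c * poch (c + 1) m.
Proof.
rewrite /poch big_ord_recl addr0; congr (_ * _); apply: eq_bigr => i _.
by rewrite lift0 -natr1 addrCA addrC.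
Qed.

Lemma pochD c m k : poch c (m + k) = poch c m * poch (c + m%:R) k.
Proof.
elim: k => [|k IH]; first by rewrite addn0 poch0 mulr1.
by rewrite addnS !poch_recr IH natrD addrA mulrA.
Qed.

Lemma poch_gt0 c m : 0 < c -> 0 < poch c m.
Proof. by move=> c_gt0; apply: prodr_gt0 => i _; rewrite ltr_wpDr ?ler0n. Qed.

Lemma poch_Nnat n m : poch (- n%:R : R) m = (-1) ^+ m * (n ^_ m)%:R.
Proof.
elim: m => [|m IH]; first by rewrite poch0 mul1r.
rewrite poch_recr IH ffactnSr natrM exprS.
have [m_le_n | n_lt_m] := leqP m n; first by rewrite natrB //; ring.
by rewrite ffact_small // !(mulr0, mul0r).
Qed.

Lemma gbinom_poch (a : R) n : gbinom (n%:R + a) n = poch (a + 1) n / (n`!)%:R.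
Proof.
rewrite /gbinom /poch; congr (_ / _).
rewrite (reindex_inj rev_ord_inj) /=; apply: eq_bigr => i _.
by rewrite natrB ?ltn_ord // -natr1; ring.
Qed.

Lemma poch_inv_diff u m : 0 < u ->
  (poch u m)^-1 - (poch (u + 1) m)^-1 = m%:R / poch u m.+1.
Proof.
move=> u_gt0; case: m => [|m]; first by rewrite !poch0 subrr mul0r.
have u1_gt0 : 0 < u + 1 by rewrite addr_gt0.
rewrite (poch_recl u m.+1) (poch_recr (u + 1) m) (poch_recl u m).
have := poch_gt0 _ m u1_gt0; have : 0 < u + 1 + m%:R by rewrite ltr_wpDr.
rewrite -natr1 => /gt_eqF h1 /gt_eqF h2; field.
by rewrite (gt_eqF u_gt0) h1 h2.
Qed.
End Pochhammer.

Section AltBinomialSums.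
Context {R : numFieldType}.
Implicit Types (u : nat -> R) (N : nat).

Lemma alt_binom_sum_shift u N :
  \sum_(i < N.+1) (-1) ^+ i * 'C(N, i)%:R * u i
  = u 0%N - \sum_(i < N.+1) (-1) ^+ i * 'C(N, i.+1)%:R * u i.+1.
Proof.
rewrite big_ord_recl [X in _ - X]big_ord_recr /= (@bin_small N N.+1) //.
rewrite mulr0 mul0r addr0 expr0 bin0 !mul1r -sumrN; congr (_ + _).
apply: eq_bigr => i _.
by rewrite /bump add1n exprS !mulN1r !mulNr.
Qed.

Lemma alt_binom_sumS u N :
  \sum_(i < N.+2) (-1) ^+ i * 'C(N.+1, i)%:R * u i
  = \sum_(i < N.+1) (-1) ^+ i * 'C(N, i)%:R * (u i - u i.+1).
Proof.
rewrite (alt_binom_sum_shift u N.+1) big_ord_recr /= (@bin_small N.+1 N.+2) //.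
rewrite mulr0 mul0r addr0.
under eq_bigr do rewrite binS natrD mulrDr mulrDl.
rewrite big_split /= opprD addrA -alt_binom_sum_shift.
under [RHS]eq_bigr do rewrite mulrBr.
by rewrite sumrB.
Qed.

Lemma alt_binom_sum_eq0 N :
  (0 < N)%N -> \sum_(i < N.+1) (-1) ^+ i * 'C(N, i)%:R = 0 :> R.
Proof.
case: N => // N _; have := alt_binom_sumS (fun=> 1) N.
under eq_bigr do rewrite mulr1.
by move=> ->; rewrite big1 // => i _; rewrite subrr mulr0.
Qed.

Lemma alt_binom_sum_widen u N M : (N <= M)%N ->
  \sum_(i < M.+1) (-1) ^+ i * 'C(N, i)%:R * u i
  = \sum_(i < N.+1) (-1) ^+ i * 'C(N, i)%:R * u i.
Proof.
move=> le_NM.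
rewrite [RHS](big_ord_widen M.+1 (fun i => (-1) ^+ i * 'C(N, i)%:R * u i)) //.
rewrite [RHS]big_mkcond; apply: eq_bigr => i _; case: ltnP => // lt_Ni.
by rewrite bin_small // mulr0 mul0r.
Qed.

Lemma alt_binom_sum_poch_inv N k (c : R) : 0 < c ->
  \sum_(i < N.+1) (-1) ^+ i * 'C(N, i)%:R / poch (c + i%:R) k.+1
  = (N + k)`!%:R / ((k`!)%:R * poch c (N + k).+1).
Proof.
move=> c_gt0; elim: N k => [|N IH] k.
  rewrite big_ord1 /= addr0 expr0 bin0 !mul1r add0n invfM mulrA.
  by rewrite divff ?mul1r ?natr_fact_neq0.
rewrite (alt_binom_sumS (fun i => (poch (c + i%:R) k.+1)^-1)).
under eq_bigr => i _ do
  rewrite -natr1 addrA poch_inv_diff ?ltr_wpDr ?ler0n // mulrCA.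
rewrite -mulr_sumr IH addSn addnS (factS k) natrM.
have := poch_gt0 _ (N + k).+2 c_gt0; have := natr_fact_neq0 (R := R) k.
have : k.+1%:R != 0 :> R by rewrite pnatr_eq0.
by move=> kS0 kf0 /gt_eqF P0; field; rewrite P0 kf0 (addrC 1) natr1 kS0.
Qed.
End AltBinomialSums.

Section LaguerreAtZero.
Context {R : numFieldType} (a : R).

Definition bstar_poly : nat -> {poly R} :=
  lowering_conv (fun m => poch (a + 1) m / (m`!)%:R) cstar_poly.

Lemma horner_bstar_poly i x : (bstar_poly i).[x] = bstar a x i.
Proof.
rewrite horner_sum /bstar mulr_sumr (reindex_inj rev_ord_inj) /=.
apply: eq_bigr => j _; rewrite hornerZ horner_cstar_poly /cstar.
have le_ji : (j <= i)%N by rewrite -ltnS.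
rewrite subSS subKn // -(bin_fact le_ji) !natrM.
have jf0 := natr_fact_neq0 (R := R) j.
have ijf0 := natr_fact_neq0 (R := R) (i - j).
by field; rewrite jf0 ijf0 pnatr_eq0 -lt0n bin_gt0 le_ji.
Qed.

Lemma coef_laguerre n j : (laguerre n a)`_j =
  gbinom (n%:R + a) n * (poch (- n%:R) j / (poch (a + 1) j * (j`!)%:R)).
Proof.
rewrite coef_poly; case: ltnP => // lt_nj.
by rewrite poch_Nnat ffact_small // !(mulr0, mul0r).
Qed.

Lemma laguerre_derivn_at0 n k : ((laguerre n a)^`(k)).[0] =
  gbinom (n%:R + a) n * (poch (- n%:R) k / poch (a + 1) k).
Proof.
rewrite horner0_derivn coef_laguerre -[_ *+ k`!]mulr_natr invfM !mulrA.
by rewrite divfK // natr_fact_neq0.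
Qed.

Lemma poch_Nnat_binom n i :
  poch (- n%:R : R) i / (i`!)%:R = (-1) ^+ i * 'C(n, i)%:R.
Proof.
by rewrite poch_Nnat -bin_ffact natrM mulrA mulfK // natr_fact_neq0.
Qed.

Lemma laguerre_bstar_term n k i : 0 < a + 1 ->
  poch (a + 1) i / (i`!)%:R * ((laguerre n a)^`(i + k)).[0]
  = gbinom (n%:R + a) n * poch (- n%:R) k *
    ((-1) ^+ i * 'C(n - k, i)%:R / poch (a + 1 + i%:R) k).
Proof.
move=> a1_gt0; have [le_kn | lt_nk] := leqP k n; last first.
  rewrite addnC laguerre_derivn_at0 !poch_Nnat !ffact_small ?ltn_addr //.
  by rewrite !(mulr0, mul0r).
rewrite laguerre_derivn_at0 (pochD (a + 1)) addnC pochD.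
have -> : - n%:R + k%:R = - (n - k)%:R :> R by rewrite natrB // opprB addrC.
rewrite -poch_Nnat_binom.
have := poch_gt0 _ i a1_gt0; have : 0 < poch (a + 1 + i%:R) k.
  by apply: poch_gt0; rewrite ltr_wpDr.
have := natr_fact_neq0 (R := R) i.
by move=> if0 /gt_eqF P1 /gt_eqF P2; field; rewrite if0 P1 P2.
Qed.

Lemma laguerre_bstar_sum_at0 n k : 0 < a + 1 -> (0 < n)%N ->
  \sum_(i < n.+1) poch (a + 1) i / (i`!)%:R * ((laguerre n a)^`(i + k)).[0]
  = poch (- n%:R) k / n%:R * inv_gamma_nat k.
Proof.
move=> a1_gt0 n_gt0; under eq_bigr do rewrite laguerre_bstar_term //.
rewrite -mulr_sumr; case: k => [|k].
  under eq_bigr do rewrite poch0 divr1 subn0.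
  by rewrite alt_binom_sum_eq0 // !mulr0.
have [lt_nk | le_kn] := ltnP n k.+1.
  by rewrite poch_Nnat ffact_small // !(mulr0, mul0r).
case: n n_gt0 le_kn => // m _ le_km.
rewrite (@alt_binom_sum_widen _ (fun i => (poch (a + 1 + i%:R) k.+1)^-1) _ _
  (leq_subr k.+1 m.+1)).
rewrite alt_binom_sum_poch_inv // subSS subnK // gbinom_poch factS natrM /=.
have := poch_gt0 _ m.+1 a1_gt0; have := natr_fact_neq0 (R := R) m.
have := natr_fact_neq0 (R := R) k; have : m.+1%:R != 0 :> R by rewrite pnatr_eq0.
by move=> mS0 kf0 mf0 /gt_eqF P0; field; rewrite kf0 mf0 P0 (addrC 1) natr1 mS0.
Qed.
End LaguerreAtZero.

Theorem mainTheorem2 (R : realFieldType) (a : R) (n k : nat) (x : R) :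
  -1 < a -> (1 <= n)%N -> (k <= 2)%N ->
  (\sum_(i < n.+1) bstar a x i * ((laguerre n a)^`(i + k)).[x]
     = poch (- n%:R) k / n%:R * inv_gamma_nat k)
  /\
  (\sum_(i < n.+1) cstar x i * ((laguerre n a)^`(i + k)).[x]
     = gbinom (n%:R + a) n * (poch (- n%:R) k / poch (a + 1) k)).
Proof.
move=> a_gtN1 n_gt0 _; have a1_gt0 : 0 < a + 1 by lra.
set L := laguerre n a.
have derivn_split i : L^`(i + k) = (L^`(k))^`(i) by exact: iterD.
have Lk_vanish : (L^`(k))^`(n.+1) = 0.
  by rewrite -derivn_split derivn_poly0 // (leq_trans (size_poly _ _)) ?leq_addr.
split.
  transitivity ((\sum_(i < n.+1) bstar_poly a i * (L^`(k))^`(i)).[x]).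
    rewrite horner_sum; apply: eq_bigr => i _.
    by rewrite hornerM horner_bstar_poly derivn_split.
  rewrite horner_sum_conv_cstar_poly // -(laguerre_bstar_sum_at0 _ _ k a1_gt0 n_gt0).
  by apply: eq_bigr => i _; rewrite derivn_split.
transitivity ((\sum_(i < n.+1) cstar_poly i * (L^`(k))^`(i)).[x]).
  rewrite horner_sum; apply: eq_bigr => i _.
  by rewrite hornerM horner_cstar_poly derivn_split.
by rewrite horner_sum_cstar_poly // laguerre_derivn_at0.
Qed.
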